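(* Let $K$ be an idempotent ordered TGP-$\omega$-valuation monoid, $AP$ a finite set of atomic propositions, $k\in K\setminus\{\mathbf{0},\mathbf{1}\}$, and $\varphi=\bigvee_{1\le i\le n}(k_i\wedge\varphi_i)\in k\text{-}stLTL(K,AP)$, and let $\varphi_b:=\bigvee_{1\le i\le n}\varphi_i$. Then for every $w\in(\mathcal{P}(AP))^{\omega}$: $(\|\varphi\|,w)\ge k$ if and only if $w\models\varphi_b$.
   Context: Idempotent ordered TGP-$\omega$-valuation monoid $(K,+,\cdot,Val^{\omega},\mathbf{0},\mathbf{1})$: complete (infinitary sums over arbitrary index sets with the usual axioms), idempotent monoid $(K,+,\mathbf{0})$, totally ordered by the natural order $k\le k'$ iff $k'=k'+k$, with $Val^{\omega}$ from finitely-valued sequences in $K$ to $K$ and a product $\cdot$ with zero $\mathbf{0}$ and unit $\mathbf{1}$, such that $Val^{\omega}=\mathbf{0}$ if some entry is $\mathbf{0}$, $Val^{\omega}(\mathbf{1}^{\omega})=\mathbf{1}$, $\sum_I(k\cdot\mathbf{1})=k\cdot\sum_I\mathbf{1}$, $Val^{\omega}$ distributes over finite sums of families lying entirely in $L\setminus\{\mathbf{0},\mathbf{1}\}$ or entirely in $\{\mathbf{0},\mathbf{1}\}$ ($L\subseteq K$ finite), and $Val^{\omega}(\mathbf{1},k_1,\dots)=Val^{\omega}(k_1,\dots)$, $Val^{\omega}(k,\mathbf{1},\dots)=k$, $k\le\mathbf{1}$, $k_i\ge k\ \forall i\Rightarrow Val^{\omega}((k_i)_i)\ge k$. Weighted LTL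 over $AP$ and $K$: $\varphi::=k\mid a\mid\neg a\mid\varphi\vee\varphi\mid\varphi\wedge\varphi\mid\bigcirc\varphi\mid\varphi U\varphi\mid\square\varphi$, with semantics $\|\varphi\|:(\mathcal{P}(AP))^{\omega}\to K$: $(\|k\|,w)=k$; $(\|a\|,w)=\mathbf{1}$ if $a\in w(0)$ else $\mathbf{0}$; $\neg a$ dually; $\vee\mapsto +$, $\wedge\mapsto\cdot$ pointwise; $(\|\bigcirc\varphi\|,w)=(\|\varphi\|,w_{\ge1})$; $(\|\varphi U\psi\|,w)=\sum_{i\ge0}Val^{\omega}((\|\varphi\|,w_{\ge0}),\dots,(\|\varphi\|,w_{\ge i-1}),(\|\psi\|,w_{\ge i}),\mathbf{1},\mathbf{1},\dots)$; $(\|\square\varphi\|,w)=Val^{\omega}(((\|\varphi\|,w_{\ge i}))_{i\ge0})$. $true:=\mathbf{1}$, $\varphi\tilde U\psi:=\square\varphi\vee(\varphi U\psi)$. $sbLTL(K,AP)$: $\varphi::=true\mid a\mid\neg a\mid\varphi\vee\varphi\mid\varphi\wedge\varphi\mid\bigcirc\varphi\mid\varphi\tilde U\varphi\mid\square\varphi$. $L_k=\{k'\in K\mid k'\ge k\}$. $k\text{-}stLTL(K,AP)$ consists of formulas $\bigvee_{1\le i\le n}(k_i\wedge\varphi_i)$ with $k_i\in L_k\setminus\{\mathbf{0},\mathbf{1}\}$ and $\varphi_i\in sbLTL(K,AP)$. For a formula $\psi$ built from $true,a,\neg a,\vee,\wedge,\bigcirc,U,\square$ (with $\tilde U$ as abbreviation),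 $w\models\psi$ denotes classical LTL satisfaction at position $0$ (with $w,i\models a$ iff $a\in w(i)$, $\bigcirc$ referring to position $i+1$, $\psi U\chi$ holding at $i$ iff $\chi$ holds at some $j\ge i$ and $\psi$ at all $i\le i'<j$, and $\square\psi$ iff $\psi$ holds at all $j\ge i$). *)

From Stdlib Require Import List Arith.
Import ListNotations.

Definition fin_valued {K : Type} (d : nat -> K) : Prop :=
  exists l : list K, forall n, In (d n) l.

(** The natural order is  k <= k'  iff  k' = k' + k.
    Val is a total function on sequences, but all its axioms are only
    required on finitely-valued sequences (its domain in the paper). *)
Record IOTGPVM := {
  car :> Type;
  kplus : car -> car -> car;
  kzero : car;
  kone : car;
  kmul : car -> car -> car;
  ksum : forall I : Type, (I -> car) -> car;
  val : (nat -> car) -> car;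
  plus_assoc : forall a b c, kplus a (kplus b c) = kplus (kplus a b) c;
  plus_comm : forall a b, kplus a b = kplus b a;
  plus_zero : forall a, kplus a kzero = a;
  plus_idem : forall a, kplus a a = a;
  sum_empty : forall (I : Type) (k : I -> car), (I -> False) -> ksum I k = kzero;
  sum_single : forall (I : Type) (k : I -> car) (i0 : I),
      (forall i, i = i0) -> ksum I k = k i0;
  sum_pair : forall (I : Type) (k : I -> car) (i1 i2 : I), i1 <> i2 ->
      (forall i, i = i1 \/ i = i2) -> ksum I k = kplus (k i1) (k i2);
  sum_partition : forall (I J : Type) (f : I -> J) (k : I -> car),
      ksum I k = ksum J (fun j => ksum {i : I | f i = j} (fun x => k (proj1_sig x)));
  le_total : forall a b, b = kplus b a \/ a = kplus a b;
  mul_zero_l : forall a, kmul kzero a = kzero;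
  mul_zero_r : forall a, kmul a kzero = kzero;
  mul_one_l : forall a, kmul kone a = a;
  mul_one_r : forall a, kmul a kone = a;
  val_zero : forall d, fin_valued d -> (exists i, d i = kzero) -> val d = kzero;
  val_one : val (fun _ => kone) = kone;
  sum_mul_one : forall (I : Type) (a : car),
      ksum I (fun _ : I => kmul a kone) = kmul a (ksum I (fun _ : I => kone));
  val_distr : forall (I : nat -> Type) (k : forall j, I j -> car),
      (forall j, exists l : list (I j), forall x, In x l) ->
      ((exists L : list car, forall j x, In (k j x) L /\ k j x <> kzero /\ k j x <> kone)
       \/ (forall j x, k j x = kzero \/ k j x = kone)) ->
      val (fun j => ksum (I j) (k j)) =
      ksum (forall j, I j) (fun f => val (fun j => k j (f j)));
  val_shift : forall d, fin_valued d ->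
      val (fun n => match n with 0 => kone | S m => d m end) = val d;
  val_head : forall a, val (fun n => match n with 0 => a | S _ => kone end) = a;
  le_one : forall a, kone = kplus kone a;
  val_lb : forall d a, fin_valued d ->
      (forall i, d i = kplus (d i) a) -> val d = kplus (val d) a
}.

Definition kle (K : IOTGPVM) (a b : K) : Prop := b = kplus K b a.

(** words over P(AP), subsets represented as boolean predicates *)
Definition word (AP : Type) := nat -> AP -> bool.
Definition suffix {AP : Type} (w : word AP) (i : nat) : word AP := fun n => w (i + n).

Inductive wltl (K : IOTGPVM) (AP : Type) : Type :=
| WConst : K -> wltl K AP
| WAtom : AP -> wltl K AP
| WNAtom : AP -> wltl K AP
| WOr : wltl K AP -> wltl K AP -> wltl K AP
| WAnd : wltl K AP -> wltl K AP -> wltl K AP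
| WNext : wltl K AP -> wltl K AP
| WUntil : wltl K AP -> wltl K AP -> wltl K AP
| WAlways : wltl K AP -> wltl K AP.

Arguments WConst {K AP}. Arguments WAtom {K AP}. Arguments WNAtom {K AP}.
Arguments WOr {K AP}. Arguments WAnd {K AP}. Arguments WNext {K AP}.
Arguments WUntil {K AP}. Arguments WAlways {K AP}.

Fixpoint wsem {K : IOTGPVM} {AP : Type} (phi : wltl K AP) (w : word AP) : K :=
  match phi with
  | WConst k => k
  | WAtom a => if w 0 a then kone K else kzero K
  | WNAtom a => if w 0 a then kzero K else kone K
  | WOr p q => kplus K (wsem p w) (wsem q w)
  | WAnd p q => kmul K (wsem p w) (wsem q w)
  | WNext p => wsem p (suffix w 1)
  | WUntil p q =>
      ksum K nat (fun i => val K (fun j =>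
        if j <? i then wsem p (suffix w j)
        else if j =? i then wsem q (suffix w i)
        else kone K))
  | WAlways p => val K (fun i => wsem p (suffix w i))
  end.

Inductive ltl (AP : Type) : Type :=
| LTrue : ltl AP
| LAtom : AP -> ltl AP
| LNAtom : AP -> ltl AP
| LOr : ltl AP -> ltl AP -> ltl AP
| LAnd : ltl AP -> ltl AP -> ltl AP
| LNext : ltl AP -> ltl AP
| LUntil : ltl AP -> ltl AP -> ltl AP
| LAlways : ltl AP -> ltl AP.

Arguments LTrue {AP}. Arguments LAtom {AP}. Arguments LNAtom {AP}.
Arguments LOr {AP}. Arguments LAnd {AP}. Arguments LNext {AP}.
Arguments LUntil {AP}. Arguments LAlways {AP}.

Fixpoint models {AP : Type} (psi : ltl AP) (w : word AP) (i : nat) : Prop :=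
  match psi with
  | LTrue => True
  | LAtom a => w i a = true
  | LNAtom a => w i a = false
  | LOr p q => models p w i \/ models q w i
  | LAnd p q => models p w i /\ models q w i
  | LNext p => models p w (S i)
  | LUntil p q => exists j, i <= j /\ models q w j /\ (forall i', i <= i' < j -> models p w i')
  | LAlways p => forall j, i <= j -> models p w j
  end.

Inductive sbltl (AP : Type) : Type :=
| STrue : sbltl AP
| SAtom : AP -> sbltl AP
| SNAtom : AP -> sbltl AP
| SOr : sbltl AP -> sbltl AP -> sbltl AP
| SAnd : sbltl AP -> sbltl AP -> sbltl AP
| SNext : sbltl AP -> sbltl AP
| SUntilT : sbltl AP -> sbltl AP -> sbltl AP
| SAlways : sbltl AP -> sbltl AP.

Arguments STrue {AP}. Arguments SAtom {AP}. Arguments SNAtom {AP}.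
Arguments SOr {AP}. Arguments SAnd {AP}. Arguments SNext {AP}.
Arguments SUntilT {AP}. Arguments SAlways {AP}.

(** weighted reading: true := 1,  phi ~U psi := [] phi \/ (phi U psi) *)
Fixpoint sb_to_w {K : IOTGPVM} {AP : Type} (phi : sbltl AP) : wltl K AP :=
  match phi with
  | STrue => WConst (kone K)
  | SAtom a => WAtom a
  | SNAtom a => WNAtom a
  | SOr p q => WOr (sb_to_w p) (sb_to_w q)
  | SAnd p q => WAnd (sb_to_w p) (sb_to_w q)
  | SNext p => WNext (sb_to_w p)
  | SUntilT p q => WOr (WAlways (sb_to_w p)) (WUntil (sb_to_w p) (sb_to_w q))
  | SAlways p => WAlways (sb_to_w p)
  end.

Fixpoint sb_to_ltl {AP : Type} (phi : sbltl AP) : ltl AP :=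
  match phi with
  | STrue => LTrue
  | SAtom a => LAtom a
  | SNAtom a => LNAtom a
  | SOr p q => LOr (sb_to_ltl p) (sb_to_ltl q)
  | SAnd p q => LAnd (sb_to_ltl p) (sb_to_ltl q)
  | SNext p => LNext (sb_to_ltl p)
  | SUntilT p q => LOr (LAlways (sb_to_ltl p)) (LUntil (sb_to_ltl p) (sb_to_ltl q))
  | SAlways p => LAlways (sb_to_ltl p)
  end.

Fixpoint wbigor {K : IOTGPVM} {AP : Type} (l : list (wltl K AP)) : wltl K AP :=
  match l with
  | [] => WConst (kzero K)   (* never used: formulas have n >= 1 *)
  | [x] => x
  | x :: r => WOr x (wbigor r)
  end.

Fixpoint sb_bigor {AP : Type} (l : list (sbltl AP)) : sbltl AP :=
  match l with
  | [] => STrue   (* never used: formulas have n >= 1 *)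
  | [x] => x
  | x :: r => SOr x (sb_bigor r)
  end.

(** k-stLTL: the formula  \/_{i} (k_i /\ phi_i)  given by the list of pairs (k_i, phi_i) *)
Definition is_kst {K : IOTGPVM} {AP : Type} (k : K) (ps : list (K * sbltl AP)) : Prop :=
  ps <> [] /\
  forall p, In p ps -> kle K k (fst p) /\ fst p <> kzero K /\ fst p <> kone K.

Definition kst_formula {K : IOTGPVM} {AP : Type} (ps : list (K * sbltl AP)) : wltl K AP :=
  wbigor (map (fun p => WAnd (WConst (fst p)) (sb_to_w (snd p))) ps).

Definition kst_boolean {K : IOTGPVM} {AP : Type} (ps : list (K * sbltl AP)) : sbltl AP :=
  sb_bigor (map snd ps).

(* On the Boolean fragment sbLTL the weighted semantics only takes the values
   0 and 1, and it is 1 exactly when the classical semantics holds: the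
   characteristic map  kchar : Prop -> K  turns disjunction, conjunction,
   existential and universal quantification into +, *, infinitary sums and
   Val, because 1 is the top element and Val vanishes on sequences containing 0.
   Hence the disjunct k_i /\ phi_i evaluates to k_i >= k if w |= phi_i and to 0
   otherwise, so the whole formula evaluates either to something above k or
   to 0, which is not above k since k <> 0. *)

From Stdlib Require Import List Arith Lia.
From Stdlib Require Import Classical ClassicalEpsilon FunctionalExtensionality Eqdep_dec.
Import ListNotations.

Section Monoid.

Variable K : IOTGPVM.

Lemma kle_kplus_l (k a b : K) : kle K k a -> kle K k (kplus K a b).
Proof.
  unfold kle. intro Ha. rewrite Ha at 1.
  rewrite <- plus_assoc, (plus_comm K k b), plus_assoc. reflexivity.
Qed.

Lemma kle_kplus_r (k a b : K) : kle K k b -> kle K k (kplus K a b).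
Proof. rewrite plus_comm. apply kle_kplus_l. Qed.

Lemma kle_kzero (k : K) : kle K k (kzero K) -> k = kzero K.
Proof. unfold kle. rewrite plus_comm, plus_zero. auto. Qed.

Definition kchar (P : Prop) : K :=
  if excluded_middle_informative P then kone K else kzero K.

Lemma kchar_true (P : Prop) : P -> kchar P = kone K.
Proof. intro HP. unfold kchar. destruct excluded_middle_informative; tauto. Qed.

Lemma kchar_false (P : Prop) : ~ P -> kchar P = kzero K.
Proof. intro HP. unfold kchar. destruct excluded_middle_informative; tauto. Qed.

Lemma kchar_iff (P Q : Prop) : (P <-> Q) -> kchar P = kchar Q.
Proof.
  intro HPQ. destruct (classic P) as [HP | HP].
  - rewrite !kchar_true; tauto.
  - rewrite !kchar_false; tauto.
Qed.

Lemma kplus_kchar (P Q : Prop) : kplus K (kchar P) (kchar Q) = kchar (P \/ Q).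
Proof.
  destruct (classic P) as [HP | HP]; destruct (classic Q) as [HQ | HQ];
    rewrite ?(kchar_true P), ?(kchar_false P), ?(kchar_true Q), ?(kchar_false Q),
      ?(kchar_true (P \/ Q)), ?(kchar_false (P \/ Q)) by tauto.
  - rewrite <- le_one. reflexivity.
  - rewrite <- le_one. reflexivity.
  - rewrite plus_comm, <- le_one. reflexivity.
  - apply plus_zero.
Qed.

Lemma kmul_kchar (P Q : Prop) : kmul K (kchar P) (kchar Q) = kchar (P /\ Q).
Proof.
  destruct (classic P) as [HP | HP]; destruct (classic Q) as [HQ | HQ];
    rewrite ?(kchar_true P), ?(kchar_false P), ?(kchar_true Q), ?(kchar_false Q),
      ?(kchar_true (P /\ Q)), ?(kchar_false (P /\ Q)) by tauto.
  - apply mul_one_l.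
  - apply mul_one_l.
  - apply mul_zero_l.
  - apply mul_zero_l.
Qed.

Lemma ksum_kzero (I : Type) : ksum K I (fun _ => kzero K) = kzero K.
Proof.
  replace (fun _ : I => kzero K) with (fun _ : I => kmul K (kzero K) (kone K))
    by (apply functional_extensionality; intro; apply mul_zero_l).
  rewrite sum_mul_one. apply mul_zero_l.
Qed.

(* Split I into {i0} and its complement: the sum becomes 1 + s, and 1 is the top. *)
Lemma ksum_kone_summand (I : Type) (f : I -> K) (i0 : I) :
  f i0 = kone K -> ksum K I f = kone K.
Proof.
  intro Hi0.
  set (is_i0 := fun i => if excluded_middle_informative (i = i0) then true else false).
  assert (His_i0 : forall i, is_i0 i = true <-> i = i0).
  { intro i. unfold is_i0. destruct excluded_middle_informative; split; congruence. }
  rewrite (sum_partition K I bool is_i0).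
  rewrite (sum_pair K bool _ true false); [| discriminate | intros []; auto].
  rewrite (sum_single K _ _ (exist _ i0 (proj2 (His_i0 i0) eq_refl))).
  - simpl. rewrite Hi0. symmetry. apply le_one.
  - intros [i Hi]. assert (i = i0) as -> by (apply His_i0; exact Hi).
    f_equal. apply UIP_dec, Bool.bool_dec.
Qed.

Lemma ksum_kchar (I : Type) (P : I -> Prop) :
  ksum K I (fun i => kchar (P i)) = kchar (exists i, P i).
Proof.
  destruct (classic (exists i, P i)) as [[i0 Hi0] | Hnone].
  - rewrite (kchar_true (exists i, P i)) by eauto.
    apply (ksum_kone_summand _ _ i0), kchar_true, Hi0.
  - rewrite (kchar_false (exists i, P i)) by exact Hnone.
    rewrite <- (ksum_kzero I). f_equal.
    apply functional_extensionality. intro i. apply kchar_false. eauto.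
Qed.

Lemma val_kchar (P : nat -> Prop) :
  val K (fun j => kchar (P j)) = kchar (forall j, P j).
Proof.
  destruct (classic (forall j, P j)) as [Hall | Hnot].
  - rewrite (kchar_true (forall j, P j)) by exact Hall.
    replace (fun j => kchar (P j)) with (fun _ : nat => kone K)
      by (apply functional_extensionality; intro j; symmetry; apply kchar_true, Hall).
    apply val_one.
  - rewrite (kchar_false (forall j, P j)) by exact Hnot.
    apply not_all_ex_not in Hnot as [j Hj].
    apply val_zero.
    + exists [kzero K; kone K]. intro n. unfold kchar.
      destruct excluded_middle_informative; simpl; auto.
    + exists j. apply kchar_false, Hj.
Qed.

Lemma ksum_val_until_kchar (P : nat -> Prop) (Q : nat -> Prop) :
  ksum K nat (fun i => val K (fun j =>
    if j <? i then kchar (P j) else if j =? i then kchar (Q i) else kone K)) =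
  kchar (exists i, Q i /\ forall j, j < i -> P j).
Proof.
  replace (fun i => val K (fun j =>
      if j <? i then kchar (P j) else if j =? i then kchar (Q i) else kone K))
    with (fun i => kchar (forall j, (j < i -> P j) /\ (j = i -> Q i))).
  - rewrite ksum_kchar. apply kchar_iff.
    split; intros [i Hi]; exists i.
    + split; [apply (proj2 (Hi i)); reflexivity | intros j Hj; apply (proj1 (Hi j)), Hj].
    + destruct Hi as [HQ HP]. intro j. split; [apply HP | intros ->; exact HQ].
  - apply functional_extensionality. intro i. rewrite <- val_kchar. f_equal.
    apply functional_extensionality. intro j.
    destruct (j <? i) eqn:Hlt; [apply Nat.ltb_lt in Hlt | apply Nat.ltb_ge in Hlt].
    + apply kchar_iff. split; [intros [H _]; exact (H Hlt) | split; [auto | lia]].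
    + destruct (j =? i) eqn:Heq; [apply Nat.eqb_eq in Heq | apply Nat.eqb_neq in Heq].
      * apply kchar_iff. subst j. split; [intros [_ H]; auto | split; [lia | auto]].
      * apply kchar_true. split; intro; lia.
Qed.

End Monoid.

Arguments kchar {K}.

Lemma models_shift (AP : Type) (psi : ltl AP) (w : word AP) (i j : nat) :
  models psi w (i + j) <-> models psi (suffix w i) j.
Proof.
  revert j. induction psi; intro j; simpl; try (unfold suffix; tauto).
  - rewrite IHpsi1, IHpsi2. tauto.
  - rewrite IHpsi1, IHpsi2. tauto.
  - rewrite <- IHpsi, Nat.add_succ_r. tauto.
  - split.
    + intros [m [Hjm [Hq Hp]]]. exists (m - i). split; [lia |]. split.
      * apply IHpsi2. replace (i + (m - i)) with m by lia. exact Hq.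
      * intros n Hn. apply IHpsi1, Hp. lia.
    + intros [m [Hjm [Hq Hp]]]. exists (i + m). split; [lia |]. split.
      * apply IHpsi2, Hq.
      * intros n Hn. replace n with (i + (n - i)) by lia. apply IHpsi1, Hp. lia.
  - split.
    + intros H m Hm. apply IHpsi, H. lia.
    + intros H m Hm. replace m with (i + (m - i)) by lia. apply IHpsi, H. lia.
Qed.

Lemma models_suffix (AP : Type) (psi : ltl AP) (w : word AP) (i : nat) :
  models psi w i <-> models psi (suffix w i) 0.
Proof. rewrite <- models_shift, Nat.add_0_r. reflexivity. Qed.

(* An equality of functions, so that it also rewrites under the binders of Val and of sums. *)
Lemma wsem_sb_to_w (K : IOTGPVM) (AP : Type) (psi : sbltl AP) :
  wsem (sb_to_w psi) = fun w : word AP => kchar (K := K) (models (sb_to_ltl psi) w 0).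
Proof.
  induction psi; apply functional_extensionality; intro w; simpl;
    rewrite ?IHpsi, ?IHpsi1, ?IHpsi2, ?val_kchar, ?ksum_val_until_kchar,
      ?kplus_kchar, ?kmul_kchar.
  - symmetry. apply kchar_true. exact I.
  - destruct (w 0 a); symmetry; [apply kchar_true | apply kchar_false]; congruence.
  - destruct (w 0 a); symmetry; [apply kchar_false | apply kchar_true]; congruence.
  - reflexivity.
  - reflexivity.
  - apply kchar_iff. symmetry. apply models_suffix.
  - apply kchar_iff. setoid_rewrite <- models_suffix.
    split; intros [H | [i H]].
    + left. intros j _. apply H.
    + right. exists i. destruct H as [Hq Hp].
      split; [lia | split; [exact Hq | intros j Hj; apply Hp; lia]].
    + left. intro j. apply H. lia.
    + right. exists i. destruct H as [_ [Hq Hp]].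
      split; [exact Hq | intros j Hj; apply Hp; lia].
  - apply kchar_iff. setoid_rewrite <- models_suffix.
    split; [intros H j _ | intros H j]; apply H; lia.
Qed.

Section KstLTL.

Variables (K : IOTGPVM) (AP : Type).

Lemma kle_wsem_wbigor (k : K) (l : list (wltl K AP)) (f : wltl K AP) (w : word AP) :
  In f l -> kle K k (wsem f w) -> kle K k (wsem (wbigor l) w).
Proof.
  induction l as [| g [| h l] IH]; intros Hf Hk; [contradiction | |].
  - destruct Hf as [<- | []]. exact Hk.
  - destruct Hf as [<- | Hf].
    + apply kle_kplus_l, Hk.
    + apply kle_kplus_r, IH; assumption.
Qed.

Lemma wsem_wbigor_kzero (l : list (wltl K AP)) (w : word AP) :
  (forall f, In f l -> wsem f w = kzero K) -> wsem (wbigor l) w = kzero K.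
Proof.
  induction l as [| g [| h l] IH]; intro Hl; [reflexivity | |].
  - apply Hl. left. reflexivity.
  - change (kplus K (wsem g w) (wsem (wbigor (h :: l)) w) = kzero K).
    rewrite Hl by (left; reflexivity).
    rewrite IH by (intros f Hf; apply Hl; right; exact Hf).
    apply plus_zero.
Qed.

Lemma models_sb_bigor (l : list (sbltl AP)) (w : word AP) (i : nat) :
  l <> [] ->
  (models (sb_to_ltl (sb_bigor l)) w i <->
   exists phi, In phi l /\ models (sb_to_ltl phi) w i).
Proof.
  induction l as [| g [| h l] IH]; intro Hne; [congruence | |].
  - simpl. split; [eauto | intros [phi [[<- | []] H]]; exact H].
  - change (models (sb_to_ltl g) w i \/ models (sb_to_ltl (sb_bigor (h :: l))) w i <->
            exists phi, In phi (g :: h :: l) /\ models (sb_to_ltl phi) w i).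
    rewrite IH by discriminate. firstorder (subst; auto).
Qed.

End KstLTL.

Theorem lemma6 (K : IOTGPVM) (AP : Type) (HAP : exists l : list AP, forall a, In a l)
  (k : K) (Hk0 : k <> kzero K) (Hk1 : k <> kone K)
  (ps : list (K * sbltl AP)) (Hps : is_kst k ps) :
  forall w : word AP,
    kle K k (wsem (kst_formula ps) w) <-> models (sb_to_ltl (kst_boolean ps)) w 0.
Proof.
  intro w. destruct Hps as [Hne Hge].
  unfold kst_formula, kst_boolean.
  rewrite models_sb_bigor by (destruct ps; simpl; congruence).
  split.
  - intro Hle. apply NNPP. intro Hnone.
    rewrite wsem_wbigor_kzero in Hle. { exact (Hk0 (kle_kzero K k Hle)). }
    intros f Hf. apply in_map_iff in Hf as [[c phi] [<- Hin]].
    simpl. rewrite wsem_sb_to_w, kchar_false; [apply mul_zero_r |].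
    intro Hm. apply Hnone. exists phi. split; [apply in_map_iff; exists (c, phi) |]; auto.
  - intros [phi [Hin Hm]]. apply in_map_iff in Hin as [[c phi'] [Heq Hin]]. simpl in Heq. subst phi'.
    apply (kle_wsem_wbigor K AP k _ (WAnd (WConst c) (sb_to_w phi))).
    + apply in_map_iff. exists (c, phi). auto.
    + simpl. rewrite wsem_sb_to_w, kchar_true, mul_one_r by exact Hm.
      apply (Hge (c, phi) Hin).
Qed.
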